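(* Let $n\ge 1$. Every game of Planted Brussels Sprouts of order $n$ ends after exactly $n-1$ moves, no matter how the moves are chosen.
   Context: Planted Brussels Sprouts of order $n$: start with a closed disk with $n$ marked points on its boundary circle, labeled $1,\dots,n$ in clockwise order. Attached to each marked point is an arm, a short segment pointing into the interior of the disk; these arms are free. A move consists of two steps. First, choose two free arms and join their free ends by a simple curve (an arc) in the disk that does not intersect any previously drawn arc or arm; the two joined arms cease to be free. Second, mark a point (a notch) on the new arc, from which two new free arms emanate, one on each side of the arc. The game ends when no move is possible. *)

From mathcomp Require Import all_boot.
Set Implicit Arguments. Unset Strict Implicit. Unset Printing Implicit Defensive.

(* A free arm: either the arm at boundary marked point [i], or one of the two
   arms (side = false / true) emanating from the notch of the [k]-th move. *)
Inductive arm : Type :=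
| BArm (i : nat)
| NArm (k : nat) (side : bool).

(* A face (region of the disk cut out by the drawn arcs) is a topological disk;
   it is recorded by the cyclic (clockwise) sequence of the free arms pointing
   into it. *)
Definition face := seq arm.
Definition position := seq face.

Definition init_position (n : nat) : position := [:: [seq BArm i | i <- iota 1 n]].

(* Joining the arms at positions i < j of face f by an arc splits the face into
   two faces: the one containing the arms strictly between them (plus one new
   notch arm), and the one containing the remaining arms (plus the other new
   notch arm).  The notch arms sit where the arc lies in the cyclic order. *)
Definition face_in (f : face) (i j : nat) (x : arm) : face :=
  drop i.+1 (take j f) ++ [:: x].
Definition face_out (f : face) (i j : nat) (y : arm) : face :=
  drop j.+1 f ++ take i f ++ [:: y].

Inductive move (k : nat) : position -> position -> Prop :=
| Move (s1 s2 : position) (f : face) (i j : nat) :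
    i < j -> j < size f ->
    move k (s1 ++ f :: s2)
           (s1 ++ face_in f i j (NArm k false) :: face_out f i j (NArm k true) :: s2).

Definition terminal (p : position) : Prop := forall k q, ~ move k p q.

Definition is_play (n m : nat) (p : nat -> position) : Prop :=
  p 0 = init_position n /\ forall t, t < m -> move t (p t) (p t.+1).

From mathcomp Require Import all_boot.
From mathcomp Require Import zify.

Set Implicit Arguments.
Unset Strict Implicit.
Unset Printing Implicit Defensive.

(* A move removes two arms and adds two notch arms, so the total number of
   free arms stays n, while the number of faces grows by one.  Every face
   contains a free arm (the two new faces each receive a notch arm), hence
   after t moves t + 1 <= n.  At the end no face holds two arms, so each face
   holds exactly one and t + 1 = n. *)

Definition arm_count (P : position) : nat := sumn [seq size f | f <- P].

Definition nonempty_faces (P : position) : bool := all (fun f : face => 0 < size f) P.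

Lemma arm_count_cat (P Q : position) : arm_count (P ++ Q) = arm_count P + arm_count Q.
Proof. by rewrite /arm_count map_cat sumn_cat. Qed.

Lemma arm_count_cons (f : face) (P : position) : arm_count (f :: P) = size f + arm_count P.
Proof. by []. Qed.

Lemma size_face_in (f : face) (i j : nat) (x : arm) :
  j <= size f -> size (face_in f i j x) = (j - i.+1).+1.
Proof. by move=> le_j; rewrite size_cat size_drop size_take_min addn1 (minn_idPl le_j). Qed.

Lemma size_face_out (f : face) (i j : nat) (y : arm) :
  i <= size f -> size (face_out f i j y) = (size f - j.+1 + i).+1.
Proof. by move=> le_i; rewrite !size_cat size_drop size_take_min (minn_idPl le_i) /=; lia. Qed.

Lemma move_size (k : nat) (P Q : position) : move k P Q -> size Q = (size P).+1.
Proof. by case=> s1 s2 f i j _ _; rewrite !size_cat /= addnS. Qed.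

Lemma move_arm_count (k : nat) (P Q : position) : move k P Q -> arm_count Q = arm_count P.
Proof.
case=> s1 s2 f i j lt_ij lt_j; rewrite !arm_count_cat !arm_count_cons.
rewrite size_face_in ?size_face_out; lia.
Qed.

Lemma move_nonempty_faces (k : nat) (P Q : position) :
  move k P Q -> nonempty_faces P -> nonempty_faces Q.
Proof.
case=> s1 s2 f i j lt_ij lt_j.
rewrite /nonempty_faces !all_cat /= => /and3P[-> _ ->].
by rewrite size_face_in ?size_face_out //; lia.
Qed.

Lemma terminal_faces_small (P : position) :
  terminal P -> all (fun f : face => size f <= 1) P.
Proof.
suff small s1 : terminal (s1 ++ P) -> all (fun f : face => size f <= 1) P.
  exact: small [::].
elim: P s1 => //= f P IHP s1 endP; apply/andP; split.
  rewrite leqNgt; apply/negP=> lt1f.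
  exact: endP 0 _ (Move 0 s1 P (ltn0Sn 0) lt1f).
by apply: (IHP (rcons s1 f)); rewrite cat_rcons.
Qed.

Lemma size_le_arm_count (P : position) : nonempty_faces P -> size P <= arm_count P.
Proof.
elim: P => //= f P IHP /andP[f_gt0 /IHP le_P].
by rewrite arm_count_cons -add1n leq_add.
Qed.

Lemma arm_count_unit_faces (P : position) :
  nonempty_faces P -> all (fun f : face => size f <= 1) P -> arm_count P = size P.
Proof.
elim: P => //= f P IHP /andP[f_gt0 P_gt0] /andP[f_le1 P_le1].
by rewrite arm_count_cons IHP //; lia.
Qed.

Lemma play_invariant (n m : nat) (p : nat -> position) (t : nat) :
  0 < n -> is_play n m p -> t <= m ->
  [/\ size (p t) = t.+1, arm_count (p t) = n & nonempty_faces (p t)].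
Proof.
move=> n_gt0 [p0 moves]; elim: t => [|t IHt] le_tm.
  by rewrite p0 /arm_count /nonempty_faces /= size_map size_iota addn0 n_gt0.
have [faces arms nonempty] := IHt (ltnW le_tm).
have mv := moves t le_tm.
split; first by rewrite (move_size mv) faces.
  by rewrite (move_arm_count mv) arms.
exact: move_nonempty_faces mv nonempty.
Qed.

Theorem mainTheorem1 (n : nat) (hn : 1 <= n) (m : nat) (p : nat -> position) :
  is_play n m p -> m <= n - 1 /\ (terminal (p m) -> m = n - 1).
Proof.
move=> play; have [faces arms nonempty] := play_invariant hn play (leqnn m).
split; first by have := size_le_arm_count nonempty; rewrite faces arms; lia.
move=> /terminal_faces_small small.
by have := arm_count_unit_faces nonempty small; rewrite faces arms; lia.
Qed.
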